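(* For every $n\ge1$, the $n\times n$ grid communication graph (with a direction assignment giving adjacent circles opposite directions) has exactly $n$ rings, each of length $2n\pi$, and each ring hits each of the four walls exactly once.
   Context: Grid. The $n\times m$ grid communication graph consists of $nm$ pairwise disjoint unit circles, circle $(i,j)$ in row $i$ (rows horizontal, row 1 on top) and column $j$ (columns vertical, column 1 on the left), centres on a square lattice, circle $(i,j)$ adjacent exactly to the existing circles $(i\pm1,j)$, $(i,j\pm1)$. For adjacent circles $C_i,C_j$, the link position $\phi_{ij}$ is the point of $C_i$ closest to $C_j$. A direction assignment gives each circle $C$ a direction $g(C)\in\{1,-1\}$ (counterclockwise/clockwise), with $g(C_i)=-g(C_j)$ for adjacent circles. Rings. Trace a point moving along a circle $C_i$ in direction $g(C_i)$; whenever it reaches a link position $\phi_{ij}$ of its current circle, it passes to $C_j$ at $\phi_{ji}$ and continues along $C_j$ in direction $g(C_j)$. This motion is periodic and the closed curve it traces is a ring. The circles decompose into rings overlapping only at link positions. The length of a ring is the total length of the circle arcs forming it. Walls. A ring hits the top wall each time it passes through the topmost point of a circle of row 1; similarly bottom wall (bottommost points of circles of the last row), left wall (leftmost points of circles of column 1) and right wall (rightmost points of circles of the last column). *)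

From Stdlib Require Import ZArith Reals.
From mathcomp Require Import all_boot.

Set Implicit Arguments.
Unset Strict Implicit.
Unset Printing Implicit Defensive.

(* Circles of the n x m grid: circle (i,j) is row i (0 = top row),
   column j (0 = leftmost column), 0-based. *)
Definition cell (n m : nat) := ('I_n * 'I_m)%type.

(* The four compass points of a unit circle, indexed by their angle
   k * pi/2 : 0 = rightmost (E), 1 = topmost (N), 2 = leftmost (W),
   3 = bottommost (S).  Counterclockwise motion goes k -> k+1 (mod 4). *)
Definition rotd (k : nat) (d : 'I_4) : 'I_4 := inord ((d + k) %% 4).
Definition dirE : 'I_4 := inord 0.
Definition dirN : 'I_4 := inord 1.
Definition dirW : 'I_4 := inord 2.
Definition dirS : 'I_4 := inord 3.

Definition mkcell (n m i j : nat) : option (cell n m) :=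
  match (insub i : option 'I_n), (insub j : option 'I_m) with
  | Some a, Some b => Some (a, b)
  | _, _ => None
  end.

Definition nbr (n m : nat) (d : 'I_4) (c : cell n m) : option (cell n m) :=
  let i := nat_of_ord c.1 in let j := nat_of_ord c.2 in
  match nat_of_ord d with
  | 0 => mkcell n m i j.+1
  | 1 => if i is i'.+1 then mkcell n m i' j else None
  | 2 => if j is j'.+1 then mkcell n m i j' else None
  | _ => mkcell n m i.+1 j
  end.

Definition adjacent (n m : nat) (c c' : cell n m) : Prop :=
  exists d : 'I_4, nbr d c = Some c'.

(* A direction assignment: g c = 1 (counterclockwise) or -1 (clockwise),
   opposite on adjacent circles. *)
Definition direction_assignment (n m : nat) (g : cell n m -> Z) : Prop :=
  (forall c, g c = 1%Z \/ g c = (-1)%Z) /\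
  (forall c c', adjacent c c' -> g c = (- g c')%Z).

(* The link position phi_{cc'} is the compass point d of c with
   nbr d c = Some c' (the point of c closest to c').
   A state (c, d) of the motion means: the moving point is at compass
   point d of circle c and is about to traverse the quarter arc of c
   starting at d in direction g c.  One step traverses that quarter arc
   (length pi/2) to the next compass point d'; if d' is a link position
   phi_{cc'} the point passes to c' at phi_{c'c} (the opposite compass
   point of c'), otherwise it stays on c. *)
Definition qarc (n m : nat) := (cell n m * 'I_4)%type.

Definition step (n m : nat) (g : cell n m -> Z) (a : qarc n m) : qarc n m :=
  let c := a.1 in
  let d' := if Z.eqb (g c) 1%Z then rotd 1 a.2 else rotd 3 a.2 in
  match nbr d' c with
  | Some c' => (c', rotd 2 d')
  | None => (c, d')
  end.

Definition ring_of (n m : nat) (g : cell n m -> Z) (a : qarc n m) : {set qarc n m} :=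
  [set b | fconnect (step g) a b].

Definition rings (n m : nat) (g : cell n m -> Z) : {set {set qarc n m}} :=
  [set ring_of g a | a : qarc n m].

Definition ring_length (n m : nat) (Rg : {set qarc n m}) : R :=
  Rmult (INR #|Rg|) (Rdiv PI 2).

(* Number of times (per period) a ring passes through the topmost point
   of a circle of row 1 (resp. bottommost point of the last row, leftmost
   point of column 1, rightmost point of the last column).  These points
   are never link positions, so passing through them is exactly being in
   the corresponding state. *)
Definition hits_top (n m : nat) (Rg : {set qarc n m}) : nat :=
  #|[set a in Rg | (nat_of_ord a.1.1 == 0) && (a.2 == dirN)]|.
Definition hits_bottom (n m : nat) (Rg : {set qarc n m}) : nat :=
  #|[set a in Rg | (nat_of_ord a.1.1 == n.-1) && (a.2 == dirS)]|.
Definition hits_left (n m : nat) (Rg : {set qarc n m}) : nat :=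
  #|[set a in Rg | (nat_of_ord a.1.2 == 0) && (a.2 == dirW)]|.
Definition hits_right (n m : nat) (Rg : {set qarc n m}) : nat :=
  #|[set a in Rg | (nat_of_ord a.1.2 == m.-1) && (a.2 == dirE)]|.

(* Put circle (i,j) at centre (2i+1, 2j+1) in doubled coordinates, rows
   growing downwards, so that the circles tile the square [0,2n]^2 and the
   link positions of adjacent circles coincide.  Each quarter arc then moves
   the point by one diagonal unit step, keeps its diagonal direction when it
   passes to a neighbour (the neighbour turns the other way) and reflects off
   the boundary otherwise: a ring is a 45-degree billiard path in the square.
   Such a path is an inscribed tilted rectangle, determined by the odd column
   2k+1 where it meets the top wall, and the row coordinate unfolded along the
   path is a phase running through 0, ..., 4n-1.  So the label k is invariant,
   the phase increases by one per quarter arc, and since there are n labels,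
   4n phases and 4n^2 quarter arcs, the rings are exactly the n label classes,
   each of 4n quarter arcs.  On each wall the label determines the point. *)

From Stdlib Require Import ZArith Reals Lia.
From mathcomp Require Import all_boot zify.

Set Implicit Arguments.
Unset Strict Implicit.
Unset Printing Implicit Defensive.

Section OrbitsAsFibers.

Variables (T : finType) (f : T -> T) (k N : nat).
Variables (lab : T -> 'I_k) (pos : T -> nat).
Hypothesis lab_f : forall a, lab (f a) = lab a.
Hypothesis pos_f : forall a, pos (f a) = (pos a).+1 %% N.
Hypothesis card_T : #|T| = k * N.
Hypothesis lab_surj : forall i, exists a, lab a = i.

Lemma lab_iter t a : lab (iter t f a) = lab a.
Proof. by elim: t => //= t IH; rewrite lab_f. Qed.

Lemma pos_iter t a : pos (iter t f a) %% N = (pos a + t) %% N.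
Proof.
elim: t => [|t IH] /=; first by rewrite addn0.
by rewrite pos_f modn_mod -addn1 -modnDml IH modnDml addn1 addnS.
Qed.

Lemma card_iter_orbit a : #|[set iter t f a | t : 'I_N]| = N.
Proof.
rewrite card_imset ?card_ord // => t1 t2 eq_iter; apply: val_inj => /=.
have /eqP := pos_iter t1 a; rewrite eq_iter pos_iter eqn_modDl => /eqP.
by rewrite !modn_small.
Qed.

Lemma iter_orbit_sub_fiber a :
  [set iter t f a | t : 'I_N] \subset [set b | lab b == lab a].
Proof. by apply/subsetP => _ /imsetP [t _ ->]; rewrite inE lab_iter. Qed.

Lemma card_fiber i : #|[set b | lab b == i]| = N.
Proof.
have fiber_ge j : N <= #|[set b | lab b == j]|.
  have [b <-] := lab_surj j.
  by rewrite -(card_iter_orbit b) subset_leq_card ?iter_orbit_sub_fiber.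
have sum_fibers : \sum_(j < k) #|[set b | lab b == j]| = k * N.
  rewrite -card_T -sum1_card (partition_big lab xpredT) //=.
  by apply: eq_bigr => j _; rewrite sum1_card; apply: eq_card => b; rewrite inE.
have /eqP : \sum_(j < k) (#|[set b | lab b == j]| - N) = 0.
  by rewrite sumnB // sum_fibers sum_nat_const card_ord subnn.
rewrite sum_nat_eq0 => /forallP /(_ i) /=; rewrite subn_eq0 => le_fiber.
by apply/eqP; rewrite eqn_leq le_fiber fiber_ge.
Qed.

Lemma fconnect_fiber a : [set b | fconnect f a b] = [set b | lab b == lab a].
Proof.
have orbit_fiber : [set iter t f a | t : 'I_N] = [set b | lab b == lab a].
  by apply/eqP; rewrite eqEcard iter_orbit_sub_fiber card_iter_orbit card_fiber /=.
apply/eqP; rewrite eqEsubset; apply/andP; split.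
- by apply/subsetP => b; rewrite inE => /iter_findex <-; rewrite inE lab_iter.
- rewrite -orbit_fiber; apply/subsetP => _ /imsetP [t _ ->].
  by rewrite inE fconnect_iter.
Qed.

Lemma orbits_fibers :
  [set [set b | fconnect f a b] | a : T] = [set [set b | lab b == i] | i : 'I_k].
Proof.
apply/setP => A; apply/imsetP/imsetP => [[a _ ->]|[i _ ->]].
- by exists (lab a) => //; rewrite fconnect_fiber.
- by have [a lab_a] := lab_surj i; exists a => //; rewrite fconnect_fiber lab_a.
Qed.

Lemma card_orbits : #|[set [set b | fconnect f a b] | a : T]| = k.
Proof.
rewrite orbits_fibers card_imset ?card_ord // => i1 i2 eq_fiber.
have [a lab_a] := lab_surj i1.
have : a \in [set b | lab b == i1] by rewrite inE lab_a.
by rewrite eq_fiber inE lab_a => /eqP.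
Qed.

End OrbitsAsFibers.

Lemma card_fiber_section (T : finType) k (lab : T -> 'I_k) (Q : pred T)
    (w : 'I_k -> T) :
  (forall i, lab (w i) = i) -> (forall i, Q (w i)) ->
  (forall a, Q a -> a = w (lab a)) ->
  forall i, #|[set a in [set b | lab b == i] | Q a]| = 1.
Proof.
move=> lab_w Q_w eq_w i; rewrite -(cards1 (w i)); congr #|pred_of_set _|.
apply/setP => a; rewrite !inE; apply/andP/eqP => [[/eqP <- /eq_w //]|->].
by rewrite lab_w Q_w.
Qed.

(* Offset of compass point [d] from the centre of its circle, in doubled
   coordinates with rows growing downwards. *)
Definition drow (d : nat) : Z := match d with 1 => (-1)%Z | 3 => 1%Z | _ => 0%Z end.
Definition dcol (d : nat) : Z := match d with 0 => 1%Z | 2 => (-1)%Z | _ => 0%Z end.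

Definition ccw (d : nat) : nat := match d with 0 => 1 | 1 => 2 | 2 => 3 | _ => 0 end.
Definition cw (d : nat) : nat := match d with 0 => 3 | 1 => 0 | 2 => 1 | _ => 2 end.
Definition opp (d : nat) : nat := match d with 0 => 2 | 1 => 3 | 2 => 0 | _ => 1 end.

Definition turn (gam : Z) (d : nat) : nat := if (gam =? 1)%Z then ccw d else cw d.

Lemma rotdE k (d : 'I_4) : nat_of_ord (rotd k d) = (d + k) %% 4.
Proof. by rewrite /rotd inordK // ltn_pmod. Qed.

Lemma rotd1 (d : 'I_4) : nat_of_ord (rotd 1 d) = ccw d.
Proof. by rewrite rotdE; case: d => [[|[|[|[|d]]]] ?]. Qed.

Lemma rotd2 (d : 'I_4) : nat_of_ord (rotd 2 d) = opp d.
Proof. by rewrite rotdE; case: d => [[|[|[|[|d]]]] ?]. Qed.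

Lemma rotd3 (d : 'I_4) : nat_of_ord (rotd 3 d) = cw d.
Proof. by rewrite rotdE; case: d => [[|[|[|[|d]]]] ?]. Qed.

Lemma mkcell_coords n m i j c :
  mkcell n m i j = Some c -> nat_of_ord c.1 = i /\ nat_of_ord c.2 = j.
Proof.
rewrite /mkcell; case: (@insubP _ _ 'I_n i) => [a _ <-|_] //.
by case: (@insubP _ _ 'I_m j) => [b _ <- [<-]|_].
Qed.

Lemma mkcell_outside n m i j : mkcell n m i j = None -> ~ (i < n /\ j < m).
Proof.
rewrite /mkcell; case: (@insubP _ _ 'I_n i) => [a _ _|/negP ni _ [/ni //]].
by case: (@insubP _ _ 'I_m j) => [b _ _ //|/negP nj _ [_ /nj]].
Qed.

Lemma nbr_coords n m (d : 'I_4) (c c' : cell n m) : nbr d c = Some c' ->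
  Z.of_nat c'.1 = (Z.of_nat c.1 + drow d)%Z /\
  Z.of_nat c'.2 = (Z.of_nat c.2 + dcol d)%Z.
Proof.
case: c => i j; case: d => [[|[|[|[|d]]]] ?] //; rewrite /nbr /=.
- by move/mkcell_coords => [-> ->]; lia.
- by case E: (nat_of_ord i) => [|i'] // /mkcell_coords [-> ->]; lia.
- by case E: (nat_of_ord j) => [|j'] // /mkcell_coords [-> ->]; lia.
- by move/mkcell_coords => [-> ->]; lia.
Qed.

Lemma nbr_outside n m (d : 'I_4) (c : cell n m) : nbr d c = None ->
  ~ ((0 <= Z.of_nat c.1 + drow d < Z.of_nat n)%Z /\
     (0 <= Z.of_nat c.2 + dcol d < Z.of_nat m)%Z).
Proof.
case: c => i j; have := ltn_ord i; have := ltn_ord j.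
case: d => [[|[|[|[|d]]]] ?] //; rewrite /nbr /=.
- by move=> ? ? /mkcell_outside; lia.
- by case E: (nat_of_ord i) => [|i'] ? ?; [lia | move/mkcell_outside; lia].
- by case E: (nat_of_ord j) => [|j'] ? ?; [lia | move/mkcell_outside; lia].
- by move=> ? ? /mkcell_outside; lia.
Qed.

Local Arguments Z.mul : simpl never.
Local Arguments Z.of_nat : simpl never.

Definition vrow (gam : Z) (d : nat) : Z := (drow (turn gam d) - drow d)%Z.
Definition vcol (gam : Z) (d : nat) : Z := (dcol (turn gam d) - dcol d)%Z.

(* For the point at compass point [d] of circle (i,j) of an [nn x nn] grid,
   moving with velocity (vrow, vcol): the column at which its billiard path
   meets the top wall, read off the diagonal r + c = const or r - c = const
   through the point. *)
Definition intercept (nn i j : Z) (d : nat) (gam : Z) : Z :=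
  let r := (2 * i + 1 + drow d)%Z in let c := (2 * j + 1 + dcol d)%Z in
  if (vrow gam d =? - vcol gam d)%Z then Z.min (r + c) (4 * nn - r - c)
  else Z.abs (r - c).

(* The row coordinate unfolded along the path: r going down, 4nn - r going up. *)
Definition phase (nn i : Z) (d : nat) (gam : Z) : Z :=
  let r := (2 * i + 1 + drow d)%Z in
  if (vrow gam d =? 1)%Z then r else (4 * nn - r)%Z.

Definition cyclic_succ (N p q : Z) : Prop :=
  q = (p + 1)%Z \/ (p = N - 1 /\ q = 0)%Z.

Lemma billiard_cross nn i j d gam : (d < 4)%N -> (gam = 1 \/ gam = -1)%Z ->
  (0 <= i < nn)%Z -> (0 <= j < nn)%Z ->
  (0 <= i + drow (turn gam d) < nn)%Z -> (0 <= j + dcol (turn gam d) < nn)%Z ->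
  intercept nn (i + drow (turn gam d)) (j + dcol (turn gam d))
    (opp (turn gam d)) (- gam) = intercept nn i j d gam /\
  cyclic_succ (4 * nn) (phase nn i d gam)
    (phase nn (i + drow (turn gam d)) (opp (turn gam d)) (- gam)).
Proof.
case: d => [|[|[|[|d]]]] // _ [->|->];
  by rewrite /intercept /phase /cyclic_succ /=; lia.
Qed.

Lemma billiard_reflect nn i j d gam : (d < 4)%N -> (gam = 1 \/ gam = -1)%Z ->
  (0 <= i < nn)%Z -> (0 <= j < nn)%Z ->
  ~ ((0 <= i + drow (turn gam d) < nn)%Z /\ (0 <= j + dcol (turn gam d) < nn)%Z) ->
  intercept nn i j (turn gam d) gam = intercept nn i j d gam /\
  cyclic_succ (4 * nn) (phase nn i d gam) (phase nn i (turn gam d) gam).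
Proof.
case: d => [|[|[|[|d]]]] // _ [->|->];
  by rewrite /intercept /phase /cyclic_succ /=; lia.
Qed.

Lemma phase_range nn i d gam : (d < 4)%N -> (gam = 1 \/ gam = -1)%Z ->
  (0 <= i < nn)%Z -> (0 <= phase nn i d gam < 4 * nn)%Z.
Proof. by case: d => [|[|[|[|d]]]] // _ [->|->]; rewrite /phase /=; lia. Qed.

Lemma intercept_top nn j gam : (gam = 1 \/ gam = -1)%Z -> (0 <= j < nn)%Z ->
  intercept nn 0 j 1 gam = (2 * j + 1)%Z.
Proof. by case=> ->; rewrite /intercept /=; lia. Qed.

Lemma intercept_bottom nn j gam : (gam = 1 \/ gam = -1)%Z -> (0 <= j < nn)%Z ->
  intercept nn (nn - 1) j 3 gam = (2 * (nn - 1 - j) + 1)%Z.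
Proof. by case=> ->; rewrite /intercept /=; lia. Qed.

Lemma intercept_left nn i gam : (gam = 1 \/ gam = -1)%Z -> (0 <= i < nn)%Z ->
  intercept nn i 0 2 gam = (2 * i + 1)%Z.
Proof. by case=> ->; rewrite /intercept /=; lia. Qed.

Lemma intercept_right nn i gam : (gam = 1 \/ gam = -1)%Z -> (0 <= i < nn)%Z ->
  intercept nn i (nn - 1) 0 gam = (2 * (nn - 1 - i) + 1)%Z.
Proof. by case=> ->; rewrite /intercept /=; lia. Qed.

Lemma ring_length_card n m (Rg : {set qarc n m}) k :
  #|Rg| = 4 * k -> ring_length Rg = Rmult (Rmult 2 (INR k)) PI.
Proof. by rewrite /ring_length => ->; rewrite -multE mult_INR /=; field. Qed.

Lemma dirE_val : nat_of_ord dirE = 0. Proof. by rewrite /dirE inordK. Qed.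
Lemma dirN_val : nat_of_ord dirN = 1. Proof. by rewrite /dirN inordK. Qed.
Lemma dirW_val : nat_of_ord dirW = 2. Proof. by rewrite /dirW inordK. Qed.
Lemma dirS_val : nat_of_ord dirS = 3. Proof. by rewrite /dirS inordK. Qed.

Section Grid.

Variables (n' : nat) (g : cell n'.+1 n'.+1 -> Z).
Hypothesis dir_g : direction_assignment g.
Local Notation n := n'.+1.

Definition intercept_at (a : qarc n n) : Z :=
  intercept (Z.of_nat n) (Z.of_nat a.1.1) (Z.of_nat a.1.2) a.2 (g a.1).

Definition phase_at (a : qarc n n) : Z :=
  phase (Z.of_nat n) (Z.of_nat a.1.1) a.2 (g a.1).

Lemma step_billiard a : intercept_at (step g a) = intercept_at a /\
  cyclic_succ (4 * Z.of_nat n) (phase_at a) (phase_at (step g a)).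
Proof.
have [sign_g opp_g] := dir_g; case: a => c d.
have := ltn_ord c.1; have := ltn_ord c.2; have := ltn_ord d.
rewrite /step /intercept_at /phase_at /=; set d' := (if _ then _ else _).
have turn_d : nat_of_ord d' = turn (g c) d.
  by rewrite /d' /turn; case: (sign_g c) => ->; rewrite ?rotd1 ?rotd3.
case nbr_c: (nbr d' c) => [c'|] /= d4 j_lt i_lt.
- have [row_c' col_c'] := nbr_coords nbr_c.
  have g_c' : g c' = (- g c)%Z by have := opp_g c c' (ex_intro _ d' nbr_c); lia.
  have := ltn_ord c'.1; have := ltn_ord c'.2.
  rewrite turn_d in row_c' col_c'.
  rewrite rotd2 g_c' row_c' col_c' turn_d => ? ?.
  by apply: billiard_cross => //; lia.
- have := nbr_outside nbr_c; rewrite turn_d => outside.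
  by apply: billiard_reflect => //; lia.
Qed.

Lemma phase_at_range a : (0 <= phase_at a < 4 * Z.of_nat n)%Z.
Proof.
case: a => c d; rewrite /phase_at; apply: phase_range => //; first exact: dir_g.1.
by have := ltn_ord c.1; rewrite /=; lia.
Qed.

Definition ring_index (a : qarc n n) : 'I_n :=
  inord (Z.to_nat (Z.div2 (intercept_at a))).

Definition ring_phase (a : qarc n n) : nat := Z.to_nat (phase_at a).

Lemma ring_index_step a : ring_index (step g a) = ring_index a.
Proof. by rewrite /ring_index (step_billiard a).1. Qed.

Lemma ring_phase_step a : ring_phase (step g a) = (ring_phase a).+1 %% (4 * n).
Proof.
have := phase_at_range a; have := phase_at_range (step g a).
rewrite /ring_phase; case: (step_billiard a).2 => [-> ? ?|[-> ->] ? ?].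
- by rewrite modn_small; lia.
- have -> : (Z.to_nat (4 * Z.of_nat n - 1)).+1 = 4 * n by lia.
  by rewrite modnn.
Qed.

Lemma card_qarc : #|{: qarc n n}| = n * (4 * n).
Proof. by rewrite !card_prod !card_ord; lia. Qed.

Lemma ring_index_of_intercept a (j : 'I_n) :
  intercept_at a = (2 * Z.of_nat j + 1)%Z -> ring_index a = j.
Proof.
move=> intercept_a; apply: val_inj; rewrite /ring_index intercept_a Z.div2_div.
have -> : Z.to_nat ((2 * Z.of_nat j + 1) / 2) = j by Z.div_mod_to_equations; lia.
exact: inordK.
Qed.

Lemma ring_index_top a : nat_of_ord a.1.1 = 0 -> a.2 = dirN -> ring_index a = a.1.2.
Proof.
case: a => [[i j] d] /= i0 ->; apply: ring_index_of_intercept; have := ltn_ord j.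
rewrite /intercept_at /= dirN_val i0 => ?.
by apply: intercept_top; [exact: dir_g.1 | lia].
Qed.

Lemma ring_index_bottom a :
  nat_of_ord a.1.1 = n' -> a.2 = dirS -> ring_index a = rev_ord a.1.2.
Proof.
case: a => [[i j] d] /= i_last ->; apply: ring_index_of_intercept; have := ltn_ord j.
rewrite /intercept_at /= dirS_val => ?.
have -> : Z.of_nat i = (Z.of_nat n - 1)%Z by lia.
by rewrite intercept_bottom; [lia | exact: dir_g.1 | lia].
Qed.

Lemma ring_index_left a : nat_of_ord a.1.2 = 0 -> a.2 = dirW -> ring_index a = a.1.1.
Proof.
case: a => [[i j] d] /= j0 ->; apply: ring_index_of_intercept; have := ltn_ord i.
rewrite /intercept_at /= dirW_val j0 => ?.
by apply: intercept_left; [exact: dir_g.1 | lia].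
Qed.

Lemma ring_index_right a :
  nat_of_ord a.1.2 = n' -> a.2 = dirE -> ring_index a = rev_ord a.1.1.
Proof.
case: a => [[i j] d] /= j_last ->; apply: ring_index_of_intercept; have := ltn_ord i.
rewrite /intercept_at /= dirE_val => ?.
have -> : Z.of_nat j = (Z.of_nat n - 1)%Z by lia.
by rewrite intercept_right; [lia | exact: dir_g.1 | lia].
Qed.

Lemma ring_index_surj k : exists a, ring_index a = k.
Proof. by exists ((ord0, k), dirN); apply: ring_index_top. Qed.

Lemma rings_fibers : rings g = [set [set b | ring_index b == k] | k : 'I_n].
Proof.
exact: orbits_fibers ring_index_step ring_phase_step card_qarc ring_index_surj.
Qed.

Lemma card_rings : #|rings g| = n.
Proof.
exact: card_orbits ring_index_step ring_phase_step card_qarc ring_index_surj.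
Qed.

Lemma card_ring k : #|[set b | ring_index b == k]| = 4 * n.
Proof.
exact: (card_fiber ring_index_step ring_phase_step card_qarc ring_index_surj k).
Qed.

Lemma hits_top_ring k : hits_top [set b | ring_index b == k] = 1.
Proof.
apply: (card_fiber_section (w := fun k => ((ord0, k), dirN))) => [i|i|].
- exact: ring_index_top.
- by rewrite /= eqxx.
- move=> [[i j] d] /andP [/eqP /= i0 /eqP /= ->]; rewrite ring_index_top //=.
  by congr (_, _, _); apply: val_inj.
Qed.

Lemma hits_bottom_ring k : hits_bottom [set b | ring_index b == k] = 1.
Proof.
apply: (card_fiber_section (w := fun k => ((ord_max, rev_ord k), dirS))) => [i|i|].
- by rewrite ring_index_bottom //= rev_ordK.
- by rewrite /= !eqxx.
- move=> [[i j] d] /andP [/eqP /= i_last /eqP /= ->].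
  by rewrite ring_index_bottom //= rev_ordK; congr (_, _, _); apply: val_inj.
Qed.

Lemma hits_left_ring k : hits_left [set b | ring_index b == k] = 1.
Proof.
apply: (card_fiber_section (w := fun k => ((k, ord0), dirW))) => [i|i|].
- exact: ring_index_left.
- by rewrite /= eqxx.
- move=> [[i j] d] /andP [/eqP /= j0 /eqP /= ->]; rewrite ring_index_left //=.
  by congr (_, _, _); apply: val_inj.
Qed.

Lemma hits_right_ring k : hits_right [set b | ring_index b == k] = 1.
Proof.
apply: (card_fiber_section (w := fun k => ((rev_ord k, ord_max), dirE))) => [i|i|].
- by rewrite ring_index_right //= rev_ordK.
- by rewrite /= !eqxx.
- move=> [[i j] d] /andP [/eqP /= j_last /eqP /= ->].
  by rewrite ring_index_right //= rev_ordK; congr (_, _, _); apply: val_inj.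
Qed.

End Grid.

Theorem lemma13 (n : nat) (g : cell n n -> Z) :
  (1 <= n)%N ->
  direction_assignment g ->
  #|rings g| = n /\
  (forall Rg : {set qarc n n}, Rg \in rings g ->
     ring_length Rg = Rmult (Rmult 2 (INR n)) PI /\
     hits_top Rg = 1%N /\ hits_bottom Rg = 1%N /\
     hits_left Rg = 1%N /\ hits_right Rg = 1%N).
Proof.
case: n g => [//|n'] g _ dir_g; split; first exact: card_rings.
move=> Rg; rewrite rings_fibers // => /imsetP [k _ ->].
split; first exact/ring_length_card/card_ring.
by rewrite hits_top_ring ?hits_bottom_ring ?hits_left_ring ?hits_right_ring.
Qed.
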